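(* Let $\vec{\mathcal U},\vec{\mathcal V},\vec{\mathcal W}\in\Upsilon$ and suppose $\vec{\mathcal V}$ is not empty. Then $(\vec{\mathcal U}*\vec{\mathcal V})*\vec{\mathcal W}=\vec{\mathcal U}*(\vec{\mathcal V}*\vec{\mathcal W})$.
   Context: $W$ is a finite set (the propositional worlds of a propositional language over finitely many variables). Consider finite sequences $\vec{\mathcal U}=(\mathcal U_0,\ldots,\mathcal U_k)$ ($k\ge0$) of mutually disjoint subsets of $W$ (components may be empty, possibly repeatedly). $\vec{\mathcal U}$ is full iff $\bigcup_i\mathcal U_i=W$, empty iff $\bigcup_i\mathcal U_i=\emptyset$; $\Upsilon$ is the set of such sequences which are full or empty. Sequence revision $*:\Upsilon\times\Upsilon\to\Upsilon$: for $\vec{\mathcal U}=(\mathcal U_0,\ldots,\mathcal U_k)$ and $\vec{\mathcal V}=(\mathcal V_0,\ldots,\mathcal V_m)$, if $\vec{\mathcal U}$ is full then $\vec{\mathcal U}*\vec{\mathcal V}$ is the sequence $(\mathcal U_0\cap\mathcal V_0,\ldots,\mathcal U_k\cap\mathcal V_0,\ \mathcal U_0\cap\mathcal V_1,\ldots,\mathcal U_k\cap\mathcal V_1,\ \ldots,\ \mathcal U_0\cap\mathcal V_m,\ldots,\mathcal U_k\cap\mathcal V_m)$ (of length $(k+1)(m+1)$); otherwise $\vec{\mathcal U}*\vec{\mathcal V}=\vec{\mathcal V}$. Equality of sequences means equality as finite sequences. *)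

From mathcomp Require Import all_boot.
Set Implicit Arguments. Unset Strict Implicit. Unset Printing Implicit Defensive.

Definition nonempty_seq (T : Type) (s : seq T) : Prop := (0 < size s)%N.

(* Components are mutually disjoint: distinct positions give disjoint sets
   (empty components may repeat). *)
Definition mut_disjoint (W : finType) (s : seq {set W}) : Prop :=
  forall i j, (i < size s)%N -> (j < size s)%N -> i <> j ->
    nth set0 s i :&: nth set0 s j = set0.

Definition seq_union (W : finType) (s : seq {set W}) : {set W} :=
  \bigcup_(A <- s) A.

Definition full (W : finType) (s : seq {set W}) : bool := seq_union s == setT.
Definition empty_seq (W : finType) (s : seq {set W}) : bool := seq_union s == set0.

Definition in_Upsilon (W : finType) (s : seq {set W}) : Prop :=
  [/\ nonempty_seq s, mut_disjoint s & (full s || empty_seq s)].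

Definition srev (W : finType) (U V : seq {set W}) : seq {set W} :=
  if full U then flatten [seq [seq A :&: B | A <- U] | B <- V] else V.

From mathcomp Require Import all_boot.

Set Implicit Arguments.
Unset Strict Implicit.
Unset Printing Implicit Defensive.

(* If U is not full, both sides collapse to V * X.  Otherwise, since a
   non-empty member of Upsilon is full and intersection preserves fullness,
   all four revisions are the pairwise-intersection product of their
   arguments, which is associative because set intersection is. *)

Definition seq_meet (W : finType) (U V : seq {set W}) : seq {set W} :=
  [seq A :&: B | B <- V, A <- U].

Lemma seq_meetA (W : finType) : associative (@seq_meet W).
Proof.
move=> U V X; rewrite /seq_meet; elim: X => //= C X IH.
rewrite allpairs_cat IH allpairs_mapl map_allpairs; congr (flatten _ ++ _).
by apply: eq_map => B; apply: eq_map => A; rewrite setIA.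
Qed.

Lemma seq_union_meet (W : finType) (U V : seq {set W}) :
  seq_union (seq_meet U V) = seq_union U :&: seq_union V.
Proof.
rewrite /seq_union big_allpairs_dep setIC big_distrlr /=.
by apply: eq_bigr => B _; apply: eq_bigr => A _; rewrite setIC.
Qed.

Lemma full_seq_meet (W : finType) (U V : seq {set W}) :
  full U -> full V -> full (seq_meet U V).
Proof. by rewrite /full seq_union_meet => /eqP-> /eqP->; rewrite setIT. Qed.

Lemma Upsilon_full (W : finType) (U : seq {set W}) :
  in_Upsilon U -> ~~ empty_seq U -> full U.
Proof. by case=> _ _ /orP[// | ->]. Qed.

Lemma srev_full (W : finType) (U V : seq {set W}) :
  full U -> srev U V = seq_meet U V.
Proof. by rewrite /srev => ->. Qed.

Lemma srev_not_full (W : finType) (U V : seq {set W}) :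
  ~~ full U -> srev U V = V.
Proof. by rewrite /srev => /negbTE->. Qed.

Theorem proposition6 (W : finType) (U V X : seq {set W}) :
  in_Upsilon U -> in_Upsilon V -> in_Upsilon X -> ~~ empty_seq V ->
  srev (srev U V) X = srev U (srev V X).
Proof.
move=> _ UpsV _ /(Upsilon_full UpsV) fullV.
have [fullU | nfullU] := boolP (full U); last by rewrite !(srev_not_full _ nfullU).
have fullUV := full_seq_meet fullU fullV.
by rewrite !srev_full // seq_meetA.
Qed.
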